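(* There is a constant $C_0\ge 1$, depending only on $\gamma_2$ and $\varkappa$, such that if the constant $C$ in the definition of the weights $e_{\gamma,\varkappa}$ satisfies $C\ge C_0$, then the following hold, where $\gamma=(\gamma_1,\gamma_2)\ge(0,0)$ and $\varkappa\ge 0$. (i) If $\gamma_1\ge 0$ and $\gamma_2-\varkappa\ge 0$, then $$e_{\gamma,\varkappa}(a,b)\le e_{\gamma,0}(a,c)\,e_{\gamma,\varkappa}(c,b)\qquad\text{for all } a,b,c\in\mathbb Z^{d_*}.$$ (ii) If $\tilde\gamma\in\mathbb R^2$ satisfies $-\gamma\le\tilde\gamma\le\gamma$ (componentwise), then $$e_{\tilde\gamma,\varkappa}(a,0)\le e_{\gamma,\varkappa}(a,b)\,e_{\tilde\gamma,\varkappa}(b,0)\qquad\text{for all } a,b\in\mathbb Z^{d_*}.$$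
   Context: Let $d_*\ge1$. For $a\in\mathbb Z^{d_*}$, $|a|$ is the Euclidean norm and $\langle a\rangle=\max(|a|,1)$. For $a,b\in\mathbb Z^{d_*}$ put $[a-b]=\min(|a-b|,|a+b|)$. Pairs in $\mathbb R^2$ are ordered componentwise: $(x_1,x_2)\le(y_1,y_2)$ iff $x_1\le y_1$ and $x_2\le y_2$. For $\gamma=(\gamma_1,\gamma_2)\in\mathbb R^2$ and $\varkappa\ge0$, with a fixed constant $C\ge1$, define $$e_{\gamma,\varkappa}(a,b)=C\,e^{\gamma_1[a-b]}\max([a-b],1)^{\gamma_2}\min(\langle a\rangle,\langle b\rangle)^{\varkappa}.$$ *)

From Stdlib Require Import Reals Lra ZArith.
Open Scope R_scope.

(* A lattice point of Z^d is represented by a function nat -> Z; only the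
   coordinates 0..d-1 matter (every point of Z^d arises this way). *)
Definition zvec := nat -> Z.

Definition vsub (a b : zvec) : zvec := fun i => (a i - b i)%Z.
Definition vadd (a b : zvec) : zvec := fun i => (a i + b i)%Z.
Definition vzero : zvec := fun _ => 0%Z.

Fixpoint sumR (n : nat) (f : nat -> R) : R :=
  match n with
  | O => 0
  | S m => sumR m f + f m
  end.

Definition znorm (d : nat) (a : zvec) : R :=
  sqrt (sumR d (fun i => (IZR (a i))^2)).

Definition jbr (d : nat) (a : zvec) : R := Rmax (znorm d a) 1.

Definition bdist (d : nat) (a b : zvec) : R :=
  Rmin (znorm d (vsub a b)) (znorm d (vadd a b)).

Definition ew (C : R) (d : nat) (g1 g2 kappa : R) (a b : zvec) : R :=
  C * exp (g1 * bdist d a b)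
    * Rpower (Rmax (bdist d a b) 1) g2
    * Rpower (Rmin (jbr d a) (jbr d b)) kappa.

(* The weight is C exp(g1 D) M^g2 m^kappa with D = [a-b], M = max(D,1) and
   m = min(<a>,<b>).  The distance [.-.] is a pseudometric, so the
   exponential factor is submultiplicative, and its triangle inequality yields
   M_ab <= 2 max(M_ac, M_cb) and m_ab <= 2 m_cb min(M_ac, M_cb).  Since
   kappa <= g2 and max * min = M_ac M_cb, the right-hand sides are at most
   2^(g2+kappa) (M_ac M_cb)^g2 m_cb^kappa, and C >= 2^(g2+kappa) absorbs the
   power of 2.  For (ii), t1 (|a| - |b|) <= g1 [a-b], and <a> <= 2 M_ab <b>
   together with the symmetric bound give <a>^t2 <= (2 M_ab)^g2 <b>^t2 for
   |t2| <= g2; all computations are done on logarithms. *)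

From Stdlib Require Import Reals Lra.
Open Scope R_scope.

Lemma exp_le_exp x y : x <= y -> exp x <= exp y.
Proof. intros [Hlt | ->]; [left; apply exp_increasing | right]; auto. Qed.

Lemma ln_le_ln x y : 0 < x -> x <= y -> ln x <= ln y.
Proof. intros Hx [Hlt | ->]; [left; apply ln_increasing | right]; auto. Qed.

Lemma ln_ge0 x : 1 <= x -> 0 <= ln x.
Proof. intro Hx; rewrite <- ln_1; apply ln_le_ln; lra. Qed.

Lemma Rmult_max_min x y : Rmax x y * Rmin x y = x * y.
Proof. unfold Rmax, Rmin; destruct Rle_dec; ring. Qed.

Lemma add_le_2mul x y : 1 <= x -> 1 <= y -> x + y <= 2 * x * y.
Proof. intros; nra. Qed.

Lemma mul_le_of_abs_le t u g v : Rabs t <= g -> Rabs u <= v -> t * u <= g * v.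
Proof.
  intros Ht Hu. apply Rle_trans with (Rabs (t * u)); [apply Rle_abs |].
  rewrite Rabs_mult. apply Rmult_le_compat; auto using Rabs_pos.
Qed.

Lemma Rabs_ln_sub_le x y z :
  0 < x -> 0 < y -> x <= z * y -> y <= z * x -> Rabs (ln x - ln y) <= ln z.
Proof.
  intros Hx Hy Hxy Hyx.
  assert (Hz : 0 < z) by nra.
  assert (ln x <= ln z + ln y) by (rewrite <- ln_mult by lra; apply ln_le_ln; lra).
  assert (ln y <= ln z + ln x) by (rewrite <- ln_mult by lra; apply ln_le_ln; lra).
  apply Rabs_le; lra.
Qed.

Definition l2norm (n : nat) (f : nat -> R) : R := sqrt (sumR n (fun i => f i ^ 2)).

Lemma sumR_ext n f g : (forall i, f i = g i) -> sumR n f = sumR n g.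
Proof. intro H; induction n as [|n IH]; simpl; [| rewrite IH, H]; reflexivity. Qed.

Lemma sumR_nonneg n f : (forall i, 0 <= f i) -> 0 <= sumR n f.
Proof. intro H; induction n as [|n IH]; simpl; [lra | specialize (H n); lra]. Qed.

Lemma l2norm_ext_sq n f g : (forall i, f i ^ 2 = g i ^ 2) -> l2norm n f = l2norm n g.
Proof. intro H; unfold l2norm; f_equal; apply sumR_ext; auto. Qed.

(* The inductive step of Minkowski's inequality: the plane triangle inequality
   for (p, x) and (q, y), with first coordinate s <= p + q. *)
Lemma sqrt_add_sq_triangle s p q x y :
  0 <= s -> 0 <= p -> 0 <= q -> s <= p + q ->
  sqrt (s * s + (x + y) ^ 2) <= sqrt (p * p + x ^ 2) + sqrt (q * q + y ^ 2).
Proof.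
  intros Hs Hp Hq Hspq.
  set (A := sqrt (p * p + x ^ 2)); set (B := sqrt (q * q + y ^ 2)).
  assert (HA : A * A = p * p + x ^ 2) by (apply sqrt_sqrt; nra).
  assert (HB : B * B = q * q + y ^ 2) by (apply sqrt_sqrt; nra).
  assert (0 <= A /\ 0 <= B) as [HA0 HB0] by (split; apply sqrt_pos).
  assert (Hcs : p * q + x * y <= A * B).
  { assert ((A * B) * (A * B) = (p * p + x ^ 2) * (q * q + y ^ 2))
      by (rewrite <- HA, <- HB; ring).
    assert ((p * q + x * y) * (p * q + x * y) <= (A * B) * (A * B))
      by (pose proof (pow2_ge_0 (p * y - q * x)); nra).
    assert (0 <= A * B) by nra.
    nra. }
  rewrite <- (sqrt_square (A + B)) by lra.
  apply sqrt_le_1_alt.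
  assert (s * s <= (p + q) * (p + q)) by (apply Rmult_le_compat; lra).
  nra.
Qed.

Lemma l2norm_triangle n f g h :
  (forall i, f i = g i + h i) -> l2norm n f <= l2norm n g + l2norm n h.
Proof.
  intro Hf. induction n as [|n IH].
  - unfold l2norm; simpl. rewrite sqrt_0; lra.
  - unfold l2norm in *; cbn [sumR].
    assert (Hsq : forall k (u : nat -> R), 0 <= sumR k (fun i => u i ^ 2))
      by (intros; apply sumR_nonneg; intro; apply pow2_ge_0).
    rewrite <- (sqrt_sqrt (sumR n (fun i => f i ^ 2))),
            <- (sqrt_sqrt (sumR n (fun i => g i ^ 2))),
            <- (sqrt_sqrt (sumR n (fun i => h i ^ 2))), Hf by apply Hsq.
    apply sqrt_add_sq_triangle; auto using sqrt_pos.
Qed.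

Lemma znorm_l2norm d a : znorm d a = l2norm d (fun i => IZR (a i)).
Proof. reflexivity. Qed.

(* The sign [s = 1] or [s = -1] lets one lemma cover all sums and differences. *)
Lemma znorm_triangle d x y z (s : R) :
  s * s = 1 -> (forall i, IZR (x i) = IZR (y i) + s * IZR (z i)) ->
  znorm d x <= znorm d y + znorm d z.
Proof.
  intros Hs Hxyz. rewrite !znorm_l2norm.
  rewrite (l2norm_ext_sq d (fun i => IZR (z i)) (fun i => s * IZR (z i)))
    by (intro i; replace ((s * IZR (z i)) ^ 2) with (s * s * IZR (z i) ^ 2)
          by ring; rewrite Hs; ring).
  apply l2norm_triangle; exact Hxyz.
Qed.

Ltac pointwise_ring :=
  intro; unfold vsub, vadd, vzero; rewrite ?minus_IZR, ?plus_IZR; ring.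

Lemma znorm_vsub_sym d a b : znorm d (vsub a b) = znorm d (vsub b a).
Proof. rewrite !znorm_l2norm; apply l2norm_ext_sq; pointwise_ring. Qed.

Lemma znorm_vadd_sym d a b : znorm d (vadd a b) = znorm d (vadd b a).
Proof. rewrite !znorm_l2norm; apply l2norm_ext_sq; pointwise_ring. Qed.

Lemma bdist_sym d a b : bdist d a b = bdist d b a.
Proof. unfold bdist; rewrite znorm_vsub_sym, znorm_vadd_sym; reflexivity. Qed.

Lemma bdist_ge0 d a b : 0 <= bdist d a b.
Proof. unfold bdist, Rmin; destruct Rle_dec; apply sqrt_pos. Qed.

Lemma bdist_triangle d a b c : bdist d a b <= bdist d a c + bdist d c b.
Proof.
  unfold bdist.
  assert (znorm d (vsub a b) <= znorm d (vsub a c) + znorm d (vsub c b))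
    by (apply (znorm_triangle _ _ _ _ 1); [ring | pointwise_ring]).
  assert (znorm d (vsub a b) <= znorm d (vadd a c) + znorm d (vadd c b))
    by (apply (znorm_triangle _ _ _ _ (-1)); [ring | pointwise_ring]).
  assert (znorm d (vadd a b) <= znorm d (vsub a c) + znorm d (vadd c b))
    by (apply (znorm_triangle _ _ _ _ 1); [ring | pointwise_ring]).
  assert (znorm d (vadd a b) <= znorm d (vadd a c) + znorm d (vsub c b))
    by (apply (znorm_triangle _ _ _ _ (-1)); [ring | pointwise_ring]).
  unfold Rmin; repeat destruct Rle_dec; lra.
Qed.

Lemma bdist_vzero_r d a : bdist d a vzero = znorm d a.
Proof.
  unfold bdist; rewrite !znorm_l2norm.
  rewrite (l2norm_ext_sq d (fun i => IZR (vsub a vzero i)) (fun i => IZR (a i))),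
          (l2norm_ext_sq d (fun i => IZR (vadd a vzero i)) (fun i => IZR (a i)))
    by pointwise_ring.
  apply Rmin_left; lra.
Qed.

Lemma znorm_le_bdist d a c : znorm d a <= znorm d c + bdist d a c.
Proof.
  assert (znorm d a <= znorm d (vsub a c) + znorm d c)
    by (apply (znorm_triangle _ _ _ _ 1); [ring | pointwise_ring]).
  assert (znorm d a <= znorm d (vadd a c) + znorm d c)
    by (apply (znorm_triangle _ _ _ _ (-1)); [ring | pointwise_ring]).
  unfold bdist, Rmin; destruct Rle_dec; lra.
Qed.

Lemma Rabs_znorm_sub_le d a b : Rabs (znorm d a - znorm d b) <= bdist d a b.
Proof.
  pose proof (znorm_le_bdist d a b). pose proof (znorm_le_bdist d b a) as Hba.
  rewrite bdist_sym in Hba. apply Rabs_le; lra.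
Qed.

Lemma jbr_ge1 d a : 1 <= jbr d a.
Proof. apply Rmax_r. Qed.

Lemma jbr_vzero d : jbr d vzero = 1.
Proof.
  unfold jbr, znorm.
  rewrite (sumR_ext d _ (fun _ => 0)) by (intro; unfold vzero; simpl; ring).
  replace (sumR d (fun _ => 0)) with 0 by (induction d; simpl; lra).
  rewrite sqrt_0. apply Rmax_right; lra.
Qed.

Lemma jbr_le_mul d a c : jbr d a <= 2 * jbr d c * Rmax (bdist d a c) 1.
Proof.
  pose proof (znorm_le_bdist d a c). pose proof (bdist_ge0 d a c).
  assert (jbr d a <= jbr d c + Rmax (bdist d a c) 1)
    by (unfold jbr, Rmax; repeat destruct Rle_dec; lra).
  pose proof (add_le_2mul _ _ (jbr_ge1 d c) (Rmax_r (bdist d a c) 1)). lra.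
Qed.

Lemma Rmax_bdist_triangle d a b c :
  Rmax (bdist d a b) 1 <= 2 * Rmax (Rmax (bdist d a c) 1) (Rmax (bdist d c b) 1).
Proof.
  pose proof (bdist_triangle d a b c).
  pose proof (bdist_ge0 d a c). pose proof (bdist_ge0 d c b).
  unfold Rmax; repeat destruct Rle_dec; lra.
Qed.

Lemma Rmin_jbr_le d a b c :
  Rmin (jbr d a) (jbr d b) <=
  2 * Rmin (jbr d c) (jbr d b) * Rmin (Rmax (bdist d a c) 1) (Rmax (bdist d c b) 1).
Proof.
  pose proof (jbr_le_mul d a c) as Hac. pose proof (jbr_le_mul d b c) as Hbc.
  rewrite bdist_sym in Hbc.
  pose proof (Rmin_l (jbr d a) (jbr d b)). pose proof (Rmin_r (jbr d a) (jbr d b)).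
  pose proof (jbr_ge1 d b).
  pose proof (Rmax_r (bdist d a c) 1). pose proof (Rmax_r (bdist d c b) 1).
  unfold Rmin at 2 3; repeat destruct Rle_dec; nra.
Qed.

Lemma ew_eq_exp C d g1 g2 kappa a b : 0 < C ->
  ew C d g1 g2 kappa a b =
  exp (ln C + g1 * bdist d a b + g2 * ln (Rmax (bdist d a b) 1)
       + kappa * ln (Rmin (jbr d a) (jbr d b))).
Proof. intro HC; unfold ew, Rpower; rewrite !exp_plus, exp_ln by exact HC; ring. Qed.

Lemma ln_le_of_Rpower_le e C : Rpower 2 e <= C -> 0 < C /\ e * ln 2 <= ln C.
Proof.
  intro HC. assert (0 < Rpower 2 e) by apply exp_pos.
  split; [lra |]. rewrite <- ln_Rpower. apply ln_le_ln; assumption.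
Qed.

Lemma ew_triangle C d g1 g2 kappa a b c :
  Rpower 2 (g2 + kappa) <= C -> 0 <= g1 -> 0 <= kappa <= g2 ->
  ew C d g1 g2 kappa a b <= ew C d g1 g2 0 a c * ew C d g1 g2 kappa c b.
Proof.
  intros HC Hg1 Hk. destruct (ln_le_of_Rpower_le _ _ HC) as [HC0 HlnC].
  rewrite !ew_eq_exp, <- exp_plus by exact HC0. apply exp_le_exp.
  pose proof (Rmax_bdist_triangle d a b c) as HM.
  pose proof (Rmin_jbr_le d a b c) as Hm.
  pose proof (Rmax_r (bdist d a c) 1). pose proof (Rmax_r (bdist d c b) 1).
  pose proof (jbr_ge1 d a). pose proof (jbr_ge1 d b). pose proof (jbr_ge1 d c).
  set (Mac := Rmax (bdist d a c) 1) in *; set (Mcb := Rmax (bdist d c b) 1) in *.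
  assert (1 <= Rmin Mac Mcb) by (apply Rmin_glb; lra).
  assert (1 <= Rmax Mac Mcb) by (apply Rle_trans with Mac; [lra | apply Rmax_l]).
  assert (1 <= Rmin (jbr d c) (jbr d b)) by (apply Rmin_glb; lra).
  assert (1 <= Rmin (jbr d a) (jbr d b)) by (apply Rmin_glb; lra).
  assert (HlnM : ln (Rmax (bdist d a b) 1) <= ln 2 + ln (Rmax Mac Mcb)).
  { rewrite <- ln_mult by lra.
    apply ln_le_ln; [pose proof (Rmax_r (bdist d a b) 1); lra | exact HM]. }
  assert (Hlnm : ln (Rmin (jbr d a) (jbr d b))
                 <= ln 2 + ln (Rmin (jbr d c) (jbr d b)) + ln (Rmin Mac Mcb)).
  { rewrite <- !ln_mult by nra. apply ln_le_ln; [lra | exact Hm]. }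
  assert (Hsplit : ln (Rmax Mac Mcb) + ln (Rmin Mac Mcb) = ln Mac + ln Mcb)
    by (rewrite <- !ln_mult, Rmult_max_min by lra; reflexivity).
  assert (Hmin0 : 0 <= ln (Rmin Mac Mcb)) by (apply ln_ge0; lra).
  pose proof (Rmult_le_compat_l _ _ _ Hg1 (bdist_triangle d a b c)).
  pose proof (Rmult_le_compat_l g2 _ _ ltac:(lra) HlnM).
  pose proof (Rmult_le_compat_l kappa _ _ ltac:(lra) Hlnm).
  pose proof (Rmult_le_compat_r _ _ _ Hmin0 (proj2 Hk)).
  nra.
Qed.

Lemma ew_origin C d g1 g2 kappa t1 t2 a b :
  Rpower 2 g2 <= C -> 0 <= kappa -> Rabs t1 <= g1 -> Rabs t2 <= g2 ->
  ew C d t1 t2 kappa a vzero <= ew C d g1 g2 kappa a b * ew C d t1 t2 kappa b vzero.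
Proof.
  intros HC Hk Ht1 Ht2. destruct (ln_le_of_Rpower_le _ _ HC) as [HC0 HlnC].
  rewrite !ew_eq_exp, <- exp_plus by exact HC0. apply exp_le_exp.
  rewrite !bdist_vzero_r, jbr_vzero, !(Rmin_right _ 1), ln_1 by apply jbr_ge1.
  fold (jbr d a) (jbr d b).
  pose proof (jbr_ge1 d a). pose proof (jbr_ge1 d b).
  pose proof (Rmax_r (bdist d a b) 1) as HM1.
  assert (Hjbr : Rabs (ln (jbr d a) - ln (jbr d b)) <= ln (2 * Rmax (bdist d a b) 1)).
  { pose proof (jbr_le_mul d a b). pose proof (jbr_le_mul d b a) as Hba.
    rewrite bdist_sym in Hba. apply Rabs_ln_sub_le; lra. }
  rewrite ln_mult in Hjbr by lra.
  pose proof (mul_le_of_abs_le _ _ _ _ Ht1 (Rabs_znorm_sub_le d a b)).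
  pose proof (mul_le_of_abs_le _ _ _ _ Ht2 Hjbr).
  assert (0 <= kappa * ln (Rmin (jbr d a) (jbr d b)))
    by (apply Rmult_le_pos; [lra | apply ln_ge0, Rmin_glb; lra]).
  nra.
Qed.

Theorem lemma2p1 :
  forall (g2 kappa : R), 0 <= g2 -> 0 <= kappa ->
  exists C0 : R, 1 <= C0 /\
  forall (C : R), C0 <= C ->
  forall (d : nat), (1 <= d)%nat ->
  forall (g1 : R), 0 <= g1 ->
    (* (i) *)
    ((0 <= g2 - kappa) ->
      forall a b c : zvec,
        ew C d g1 g2 kappa a b <= ew C d g1 g2 0 a c * ew C d g1 g2 kappa c b)
    /\
    (* (ii) *)
    (forall (t1 t2 : R), - g1 <= t1 <= g1 -> - g2 <= t2 <= g2 ->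
      forall a b : zvec,
        ew C d t1 t2 kappa a vzero <= ew C d g1 g2 kappa a b * ew C d t1 t2 kappa b vzero).
Proof.
  intros g2 kappa Hg2 Hk.
  assert (Hmono : forall x y, x <= y -> Rpower 2 x <= Rpower 2 y)
    by (intros; apply Rle_Rpower; lra).
  exists (Rpower 2 (g2 + kappa)). split.
  { rewrite <- (Rpower_O 2) by lra. apply Hmono; lra. }
  intros C HC d _ g1 Hg1. split.
  - intros Hgk a b c. apply ew_triangle; auto; lra.
  - intros t1 t2 Ht1 Ht2 a b.
    apply ew_origin; auto using Rabs_le.
    apply Rle_trans with (Rpower 2 (g2 + kappa)); auto. apply Hmono; lra.
Qed.
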